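(* Let $(A,\cdot,\alpha)$ be an anticommutative multiplicative Hom-algebra over a field $\mathbb{K}$ of characteristic $0$. Then: (i) $J_{\alpha}(x,y,z)$ is skew-symmetric in its three variables; (ii) for all $w,x,y,z\in A$, $$\alpha^{2}(w)\cdot J_{\alpha}(x,y,z)-\alpha^{2}(x)\cdot J_{\alpha}(y,z,w)+\alpha^{2}(y)\cdot J_{\alpha}(z,w,x)-\alpha^{2}(z)\cdot J_{\alpha}(w,x,y)$$ $$= J_{\alpha}(w\cdot x,\alpha(y),\alpha(z))+J_{\alpha}(y\cdot z,\alpha(w),\alpha(x))+J_{\alpha}(w\cdot y,\alpha(z),\alpha(x))+J_{\alpha}(z\cdot x,\alpha(w),\alpha(y))-J_{\alpha}(z\cdot w,\alpha(x),\alpha(y))-J_{\alpha}(x\cdot y,\alpha(z),\alpha(w)).$$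
   Context: A multiplicative Hom-algebra is a triple $(A,\cdot,\alpha)$ with $A$ a vector space over $\mathbb{K}$, $\cdot$ a bilinear product, and $\alpha:A\to A$ linear with $\alpha(x\cdot y)=\alpha(x)\cdot\alpha(y)$. Anticommutative means $x\cdot y=-y\cdot x$. The Hom-Jacobian is $J_{\alpha}(x,y,z)=(x\cdot y)\cdot\alpha(z)+(y\cdot z)\cdot\alpha(x)+(z\cdot x)\cdot\alpha(y)$. *)

From HB Require Import structures.
From mathcomp Require Import all_boot all_order all_algebra.
Set Implicit Arguments. Unset Strict Implicit. Unset Printing Implicit Defensive.
Import GRing.Theory.
Local Open Scope ring_scope.

Definition bilinear_prod (K : fieldType) (A : lmodType K) (mul : A -> A -> A) :=
  (forall a x y z, mul (a *: x + y) z = a *: mul x z + mul y z) /\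
  (forall a x y z, mul x (a *: y + z) = a *: mul x y + mul x z).

Definition hom_multiplicative (A : Type) (mul : A -> A -> A) (alpha : A -> A) :=
  forall x y, alpha (mul x y) = mul (alpha x) (alpha y).

Definition anticommutative (K : fieldType) (A : lmodType K) (mul : A -> A -> A) :=
  forall x y, mul x y = - mul y x.

Definition homJ (K : fieldType) (A : lmodType K) (mul : A -> A -> A)
  (alpha : A -> A) (x y z : A) : A :=
  mul (mul x y) (alpha z) + mul (mul y z) (alpha x) + mul (mul z x) (alpha y).

(* Write [a, b] for the product.  For (ii), expand everything into the monomials
   [alpha^2 a, [[b, c], alpha d]]: since alpha is multiplicative,
   J([a, b], alpha c, alpha d) is two such monomials plus
   [[alpha c, alpha d], [alpha a, alpha b]], and on the right-hand side these
   last terms cancel in pairs by anticommutativity.  What remains is the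
   left-hand side, regrouped. *)
From HB Require Import structures.
From mathcomp Require Import all_boot all_order all_algebra.
Import GRing.Theory.
Local Open Scope ring_scope.
Set Implicit Arguments. Unset Strict Implicit.

Section HomJacobian.
Variables (K : fieldType) (A : lmodType K) (mul : A -> A -> A) (alpha : A -> A).
Hypothesis hbil : bilinear_prod mul.
Hypothesis hanti : anticommutative mul.

Local Notation J := (homJ mul alpha).

Lemma mulDl x y z : mul (x + y) z = mul x z + mul y z.
Proof. by have := (proj1 hbil) 1 x y z; rewrite !scale1r. Qed.

Lemma mulDr x y z : mul x (y + z) = mul x y + mul x z.
Proof. by have := (proj2 hbil) 1 x y z; rewrite !scale1r. Qed.

Lemma mulNl x y : mul (- x) y = - mul x y.
Proof.
have mul0l : mul 0 y = 0 by apply: (addrI (mul 0 y)); rewrite -mulDl !addr0.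
by apply: (addrI (mul x y)); rewrite -mulDl !subrr mul0l.
Qed.

Lemma mulNr x y : mul x (- y) = - mul x y.
Proof. by rewrite hanti mulNl opprK hanti. Qed.

Lemma homJ_rotate x y z : J x y z = J y z x.
Proof. by rewrite /homJ [RHS]addrC addrA. Qed.

Lemma homJ_swap x y z : J y x z = - J x y z.
Proof.
rewrite /homJ [mul y x]hanti [mul x z]hanti [mul z y]hanti !mulNl.
by rewrite !opprD addrAC.
Qed.

Definition hom_monomial a b c d := mul (alpha (alpha a)) (mul (mul b c) (alpha d)).

Lemma hom_monomial_swap a b c d : hom_monomial a c b d = - hom_monomial a b c d.
Proof. by rewrite /hom_monomial [mul c b]hanti mulNl mulNr. Qed.

Lemma mul_homJ a b c d :
  mul (alpha (alpha a)) (J b c d)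
  = hom_monomial a b c d + hom_monomial a c d b + hom_monomial a d b c.
Proof. by rewrite /homJ !mulDr. Qed.

Hypothesis hmult : hom_multiplicative mul alpha.

Lemma homJ_mul_alpha a b c d :
  J (mul a b) (alpha c) (alpha d)
  = hom_monomial c a b d - hom_monomial d a b c
    + mul (mul (alpha c) (alpha d)) (mul (alpha a) (alpha b)).
Proof.
rewrite /homJ /hom_monomial hmult.
rewrite [mul (mul (mul a b) _) _]hanti [mul (mul (alpha d) _) _]hanti.
by rewrite [mul (alpha d) _]hanti mulNr opprK addrC addrA.
Qed.

Lemma homJ_mul_pair a b c d :
  J (mul a b) (alpha c) (alpha d) + J (mul c d) (alpha a) (alpha b)
  = hom_monomial c a b d - hom_monomial d a b c
    + (hom_monomial a c d b - hom_monomial b c d a).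
Proof.
rewrite !homJ_mul_alpha addrACA [mul (mul (alpha a) (alpha b)) _]hanti.
by rewrite subrr addr0.
Qed.

Lemma homJ_identity w x y z :
  mul (alpha (alpha w)) (J x y z) - mul (alpha (alpha x)) (J y z w)
    + mul (alpha (alpha y)) (J z w x) - mul (alpha (alpha z)) (J w x y)
  = J (mul w x) (alpha y) (alpha z) + J (mul y z) (alpha w) (alpha x)
    + J (mul w y) (alpha z) (alpha x) + J (mul z x) (alpha w) (alpha y)
    - J (mul z w) (alpha x) (alpha y) - J (mul x y) (alpha z) (alpha w).
Proof.
rewrite -[RHS]addrA -[in RHS]opprD -[in RHS](addrA (J _ _ _ + J _ _ _) (J _ _ _)).
rewrite !homJ_mul_pair !mul_homJ.
(* After these two swaps both sides are sums of the same twelve monomials. *)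
rewrite (hom_monomial_swap y z x w) (hom_monomial_swap z y w x).
rewrite !opprD !opprK !addrA.
by rewrite [RHS](ACl (12*3*7*4*9*6*10*1*8*2*11*5)).
Qed.

End HomJacobian.

Theorem lemma2p4 (K : fieldType) (A : lmodType K)
  (mul : A -> A -> A) (alpha : {linear A -> A})
  (hchar : [pchar K] =i pred0)
  (hbil : bilinear_prod mul)
  (hmult : hom_multiplicative mul alpha)
  (hanti : anticommutative mul) :
  (* (i) skew-symmetry of J_alpha in its three variables *)
  (forall x y z : A,
     homJ mul alpha y x z = - homJ mul alpha x y z /\
     homJ mul alpha x z y = - homJ mul alpha x y z /\
     homJ mul alpha z y x = - homJ mul alpha x y z) /\
  (* (ii) *)
  (forall w x y z : A,
     let J := homJ mul alpha in
     let a2 := fun u => alpha (alpha u) in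
     mul (a2 w) (J x y z) - mul (a2 x) (J y z w)
       + mul (a2 y) (J z w x) - mul (a2 z) (J w x y)
     = J (mul w x) (alpha y) (alpha z) + J (mul y z) (alpha w) (alpha x)
       + J (mul w y) (alpha z) (alpha x) + J (mul z x) (alpha w) (alpha y)
       - J (mul z w) (alpha x) (alpha y) - J (mul x y) (alpha z) (alpha w)).
Proof.
have swap := homJ_swap alpha hbil hanti.
split=> [x y z|w x y z J a2].
  split; [exact: swap | split].
    by rewrite -homJ_rotate swap.
  by rewrite homJ_rotate swap.
exact: homJ_identity.
Qed.
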